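(* Let $(A,m)$ be a strict $A_\infty$-algebra over a field $\mathbf{F}$, and let $m=\sum_{k\ge1}m_k\in\prod_{k}C^{k,2-k}(A,A)$. Then the class of $m$ in the Hochschild cohomology vanishes: $[m]=0\in \mathrm{HH}^2(A,A)$, i.e. there exists a cochain $a$ of total degree $1$ with $D(a)=[m,a]=m$.
   Context: A strict $A_\infty$-algebra $(A,m)$ over $\mathbf{F}$ is a $\mathbf{Z}$-graded vector space $A=\bigoplus_{k\in\mathbf{Z}}A^k$ with graded linear maps $m_n:A^{\otimes n}\to A$ ($n\ge1$) of degree $2-n$ satisfying, for every $n\ge1$, $\sum_{n=r+s+t}(-1)^{rs+t}m_{r+1+t}(\mathbf{I}^{\otimes r}\otimes m_s\otimes \mathbf{I}^{\otimes t})=0$ (with $r,t\ge0$, $s\ge1$), where tensor products of graded maps are evaluated with the Koszul sign rule $(f\otimes g)(x\otimes y)=(-1)^{|g||x|}f(x)\otimes g(y)$. Let $C^{n,k}(A,A)=\mathrm{Hom}^k(A^{\otimes n},A)=\prod_i\mathrm{Hom}((A^{\otimes n})^i,A^{i+k})$ (with $A^{\otimes 0}=\mathbf{F}$, so $C^{0,k}\cong A^k$); its total degree is $n+k$. For $f\in C^{n,k}$, $g\in C^{m,l}$ the Gerstenhaber bracket $[f,g]\in C^{n+m-1,k+l}$ is $[f,g]=\sum_{i=0}^{n-1}(-1)^{\delta_1}f(\mathbf{I}^{\otimes i}\otimes g\otimes \mathbf{I}^{\otimes n-i-1})-(-1)^{(n+k-1)(m+l-1)}\sum_{i=0}^{m-1}(-1)^{\delta_2}g(\mathbf{I}^{\otimes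 i}\otimes f\otimes\mathbf{I}^{\otimes m-i-1})$, where $\delta_1=(n-1)(m-1)+(n-1)l+i(m-1)$, $\delta_2=(m-1)(n-1)+(m-1)k+i(n-1)$, and an empty sum is $0$; it is extended bilinearly to products of such spaces. Since $m_k\in C^{k,2-k}$, $m$ has total degree $2$, $[m,m]=0$, and $D=[m,-]$ is a differential on $\prod C^{*,*}(A,A)$. The Hochschild cohomology is $\mathrm{HH}^*(A,A)=H^*(\prod_iC^{i,*-i}(A,A),D)$. *)

From HB Require Import structures.
From mathcomp Require Import all_boot all_order all_algebra zify.
Set Implicit Arguments. Unset Strict Implicit. Unset Printing Implicit Defensive.
Import Order.TTheory GRing.Theory Num.Theory.
Local Open Scope ring_scope.

(* A Z-graded vector space over F is given by its homogeneous components
   A : int -> lmodType F  (A = \bigoplus_k A k). *)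

Definition sumz (s : seq int) : int := foldr (fun a b => a + b) 0 s.

(* a homogeneous elementary tensor x_1 (x) ... (x) x_n with |x_j| = s_j *)
Fixpoint args (A : int -> Type) (s : seq int) : Type :=
  match s with
  | [::] => unit
  | i :: s' => (A i * args A s')%type
  end.

Fixpoint app_args (A : int -> Type) (s1 s2 : seq int) :
    args A s1 -> args A s2 -> args A (s1 ++ s2) :=
  match s1 return args A s1 -> args A s2 -> args A (s1 ++ s2) with
  | [::] => fun _ y => y
  | i :: s1' => fun x y => (x.1, app_args x.2 y)
  end.

Fixpoint split_args (A : int -> Type) (n : nat) (s : seq int) :
    args A s -> (args A (take n s) * args A (drop n s))%type :=
  match s return args A s -> (args A (take n s) * args A (drop n s))%type with
  | [::] => fun x => (tt, x)
  | i :: s' =>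
      match n return args A (i :: s') ->
                     (args A (take n (i :: s')) * args A (drop n (i :: s')))%type with
      | 0 => fun x => (tt, x)
      | n'.+1 => fun x => let y := split_args n' x.2 in ((x.1, y.1), y.2)
      end
  end.

Definition tr (A : int -> Type) (i j : int) (e : i = j) (x : A i) : A j :=
  eq_rect i A x j e.

(* A cochain of total degree t:  an element of  prod_n C^{n, t-n}(A,A).
   Hom((A^{(x)n})^i, A^{i+k}) is encoded by the universal property of the
   tensor product: a family of multilinear maps on homogeneous components. *)
Definition cochain (F : fieldType) (A : int -> lmodType F) (t : int) :=
  forall s : seq int, args A s -> A (sumz s + (t - (size s)%:Z)).

Definition multilinear (F : fieldType) (A : int -> lmodType F) (t : int)
    (f : cochain A t) : Prop :=
  forall (s1 : seq int) (i : int) (s2 : seq int) (x1 : args A s1) (x2 : args A s2),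
    linear (fun v : A i =>
      f (s1 ++ i :: s2) (app_args (s2 := i :: s2) x1 ((v, x2) : args A (i :: s2)))).

Definition ksign (F : fieldType) (z : int) : F := if odd (absz z) then -1 else 1.

Lemma ins_deg (tf tg t : int) (e : tf + tg - 1 = t) (i p : nat) (s : seq int) :
  let s2 := take p (drop i s) in
  let d := sumz s2 + (tg - (size s2)%:Z) in
  let s' := take i s ++ d :: drop p (drop i s) in
  sumz s' + (tf - (size s')%:Z) = sumz s + (t - (size s)%:Z).
Proof.
move=> s2 d s'; rewrite -e /s' /d /s2.
have sc : forall u v : seq int, sumz (u ++ v) = sumz u + sumz v.
  by elim=> [|a u IH] v /=; rewrite ?add0r // IH addrA.
rewrite sc /=.
rewrite -[in RHS](cat_take_drop i s) -[in RHS](cat_take_drop p (drop i s)).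
rewrite !sc !size_cat /=.
lia.
Qed.

Lemma degC (tf tg t : int) : tf + tg - 1 = t -> tg + tf - 1 = t.
Proof. by move=> <-; rewrite (addrC tg). Qed.

Section Cochains.
Variables (F : fieldType) (A : int -> lmodType F).

(* Insertion  f(I^{(x) i} (x) g (x) I^{(x) rest})  of the arity-p component of g
   (total degree tg, internal degree tg - p) into the appropriate component of f
   (total degree tf), evaluated on a homogeneous tensor x of degrees s with the
   Koszul sign  (-1)^{(tg - p)(|x_1| + ... + |x_i|)}. *)
Definition ins (tf tg t : int) (e : tf + tg - 1 = t)
    (f : cochain A tf) (g : cochain A tg) (i p : nat) (s : seq int) (x : args A s) :
    A (sumz s + (t - (size s)%:Z)) :=
  let x1x23 := split_args i x in
  let x2x3 := split_args p x1x23.2 in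
  let y := g _ x2x3.1 in
  tr (A := fun d => A d) (ins_deg e i p s)
    (ksign F ((tg - p%:Z) * sumz (take i s)) *:
       f _ (app_args (s2 := _ :: _) x1x23.1 ((y, x2x3.2) : args A (_ :: _)))).

(* The Gerstenhaber bracket of a cochain f of total degree tf with a cochain g of
   total degree tg (extended bilinearly over the components f_n in C^{n,tf-n},
   g_m in C^{m,tg-m}); the arity-N component of [f,g] is the sum of [f_n,g_m]
   over n + m - 1 = N. *)
Definition brk (tf tg t : int) (e : tf + tg - 1 = t)
    (f : cochain A tf) (g : cochain A tg) : cochain A t :=
  fun s x =>
  \sum_(m < (size s).+2)
    let n := ((size s).+1 - m)%N in
    let k := tf - n%:Z in
    let l := tg - m%:Z in
    (\sum_(i < n)
        ksign F ((n%:Z - 1) * (m%:Z - 1) + (n%:Z - 1) * l + i%:Z * (m%:Z - 1)) *: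
          ins e f g i m x)
    - ksign F ((tf - 1) * (tg - 1)) *:
      (\sum_(i < m)
        ksign F ((m%:Z - 1) * (n%:Z - 1) + (m%:Z - 1) * k + i%:Z * (n%:Z - 1)) *:
          ins (degC e) g f i n x).

End Cochains.

Lemma deg_mm : (2 : int) + 2 - 1 = 3. Proof. lia. Qed.
Lemma deg_ma : (2 : int) + 1 - 1 = 2. Proof. lia. Qed.

(* (A, m) is a strict A-infinity algebra: m = (m_n)_n is a multilinear cochain of
   total degree 2 (so m_n has degree 2 - n), m_0 = 0, and for every n >= 1
     sum_{r+s+t=n, s>=1} (-1)^{rs+t} m_{r+1+t}(I^{(x)r} (x) m_s (x) I^{(x)t}) = 0. *)
Definition strict_Ainf (F : fieldType) (A : int -> lmodType F) (m : cochain A 2) : Prop :=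
  [/\ multilinear m,
      m [::] tt = 0 &
      forall (s : seq int) (x : args A s), (0 < size s)%N ->
        \sum_(p < (size s).+1 | (0 < p)%N)
          \sum_(r < (size s - p).+1)
            ksign F (r%:Z * p%:Z + (size s - p - r)%N%:Z) *:
              ins deg_mm m m r p x = 0].

(* The cochain [a] with the single component [a_1(x) = (1 - |x|) x] is an
   Euler-type grading cochain.  In [[f, a]] for a multilinear cochain [f] of
   total degree [t], inserting [a] into the [i]-th slot of [f] rescales by
   [1 - |x_i|] (with no Koszul sign, as [a] has internal degree 0), while
   applying [a] to the output of [f] rescales by [1 - (sum_i |x_i| + t - n)].
   The difference of the two totals is [t - 1], so [[f, a] = (t - 1) f]; for
   the degree-2 cochain [m] this gives [[m, a] = m]. *)
From HB Require Import structures.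
From mathcomp Require Import all_boot all_order all_algebra zify.
Import GRing.Theory.
Local Open Scope ring_scope.
Set Implicit Arguments. Unset Strict Implicit. Unset Printing Implicit Defensive.

Lemma linear_funZ (F : fieldType) (V W : lmodType F) (g : V -> W) :
  linear g -> forall (c : F) (v : V), g (c *: v) = c *: g v.
Proof.
by move=> hg; exact: (linearZZ (HB.pack g (GRing.isLinear.Build _ _ _ _ g hg)
                                 : {linear V -> W})).
Qed.

Lemma linear_fun0 (F : fieldType) (V W : lmodType F) (g : V -> W) :
  linear g -> g 0 = 0.
Proof.
by move=> hg; exact: (linear0 (HB.pack g (GRing.isLinear.Build _ _ _ _ g hg)
                                : {linear V -> W})).
Qed.

Section Transport.
Variables (F : fieldType) (A : int -> lmodType F).

Local Notation trA := (tr (A := fun d => A d)).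

Lemma tr_id (i : int) (e : i = i) (u : A i) : trA e u = u.
Proof. by rewrite (eq_irrelevance e erefl). Qed.

Lemma tr_trans (i j k : int) (e1 : i = j) (e2 : j = k) (u : A i) :
  trA e2 (trA e1 u) = trA (etrans e1 e2) u.
Proof. by case: k / e2; case: j / e1. Qed.

Lemma trZ (i j : int) (e : i = j) (c : F) (u : A i) : trA e (c *: u) = c *: trA e u.
Proof. by case: j / e. Qed.

Lemma tr0 (i j : int) (e : i = j) : trA e 0 = 0.
Proof. by case: j / e. Qed.

Lemma linear_trZ (i j : int) (e : i = j) (c : F) : linear (fun v : A i => trA e (c *: v)).
Proof. by case: j / e => a u v; rewrite /tr /= scalerDr !scalerA mulrC. Qed.

Definition cast_args (s1 s2 : seq int) (E : s1 = s2) (z : args A s1) : args A s2 :=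
  eq_rect s1 (args A) z s2 E.

Lemma cochain_cast (t : int) (f : cochain A t) (s1 s2 : seq int) (E : s1 = s2)
    (z : args A s1) (e : sumz s1 + (t - (size s1)%:Z) = sumz s2 + (t - (size s2)%:Z)) :
  trA e (f s1 z) = f s2 (cast_args E z).
Proof. by case: s2 / E in e *; rewrite tr_id. Qed.

Lemma cast_args_head (j d : int) (r : seq int) (e : j = d) (E : j :: r = d :: r)
    (v : A j) (y : args A r) :
  cast_args E ((v, y) : args A (j :: r)) = ((trA e v, y) : args A (d :: r)).
Proof. by case: d / e in E *; rewrite (eq_irrelevance E erefl). Qed.

Lemma cast_args_tail (j : int) (r1 r2 : seq int) (E' : r1 = r2) (E : j :: r1 = j :: r2)
    (v : A j) (y : args A r1) :
  cast_args E ((v, y) : args A (j :: r1)) = ((v, cast_args E' y) : args A (j :: r2)).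
Proof. by case: r2 / E' in E *; rewrite (eq_irrelevance E erefl). Qed.

Lemma split_args_size (s : seq int) (x : args A s) :
  exists E : s = take (size s) s, (split_args (size s) x).1 = cast_args E x.
Proof.
elim: s x => [|j r IH] x /=; first by case: x; exists erefl.
case: x => x0 x.
have [E' ->] := IH x.
by exists (congr1 (cons j) E'); rewrite (cast_args_tail E').
Qed.

End Transport.

Section ScaleArgument.
Variables (F : fieldType) (A : int -> lmodType F) (c : int -> F).

Fixpoint scale_arg (s : seq int) : nat -> args A s -> args A s :=
  match s return nat -> args A s -> args A s with
  | [::] => fun _ x => x
  | j :: r => fun i x =>
      match i with
      | 0 => ((c j *: x.1, x.2) : args A (j :: r))
      | i'.+1 => ((x.1, scale_arg i' x.2) : args A (j :: r))
      end
  end.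

Lemma scale_argP (s : seq int) (i : nat) (x : args A s) : (i < size s)%N ->
  exists s1 j s2 (E : s1 ++ j :: s2 = s) (x1 : args A s1) (v : A j) (x2 : args A s2),
  [/\ x = cast_args E (app_args x1 ((v, x2) : args A (j :: s2))),
      scale_arg i x = cast_args E (app_args x1 ((c j *: v, x2) : args A (j :: s2)))
    & j = nth 0 s i].
Proof.
elim: s i x => [|j r IH] [|i] x //= lt_i; case: x => x0 x.
  by exists [::], j, r, erefl, tt, x0, x.
have [s1 [j' [s2 [E [x1 [v [x2 [hx hscale hj]]]]]]]] := IH i x lt_i.
exists (j :: s1), j', s2, (congr1 (cons j) E), (x0, x1), v, x2.
by rewrite /= !(cast_args_tail E) -hx -hscale.
Qed.

Lemma multilinear_scale_arg (t : int) (f : cochain A t) : multilinear f ->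
  forall (s : seq int) (i : nat) (x : args A s), (i < size s)%N ->
  f s (scale_arg i x) = c (nth 0 s i) *: f s x.
Proof.
move=> f_ml s i x lt_i.
have [s1 [j [s2 [E [x1 [v [x2 [hx -> hj]]]]]]]] := scale_argP x lt_i.
rewrite hx -hj.
have e := congr1 (fun s => sumz s + (t - (size s)%:Z)) E.
by rewrite -!(cochain_cast f E _ e) (linear_funZ (f_ml _ _ _ x1 x2)) trZ.
Qed.

End ScaleArgument.

Section Euler.
Variables (F : fieldType) (A : int -> lmodType F).

Local Notation trA := (tr (A := fun d => A d)).
Local Notation weight j := (((1 - j)%:~R : F)).

Lemma euler_deg (j : int) : j = sumz [:: j] + (1 - (size [:: j])%:Z).
Proof. rewrite /=; lia. Qed.

Definition euler : cochain A 1 := fun s =>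
  match s return args A s -> A (sumz s + (1 - (size s)%:Z)) with
  | [:: j] => fun x => trA (euler_deg j) (weight j *: x.1)
  | _ => fun _ => 0
  end.

Arguments euler : simpl never.

Lemma euler_multilinear : multilinear euler.
Proof.
move=> s1 i s2 x1 x2; case: s1 x1 => [|j [|k s1]] x1 /=;
  try by move=> a u v /=; rewrite scaler0 addr0.
case: s2 x2 => [|k s2] x2 /=; last by move=> a u v /=; rewrite scaler0 addr0.
exact: linear_trZ.
Qed.

Lemma euler_eq0 (s : seq int) (x : args A s) : size s != 1%N -> euler x = 0.
Proof. by case: s x => [|j [|k r]]. Qed.

Lemma euler_single (d : int) (r : seq int) (y : A d) (z : args A r) : size r = 0%N ->
  exists e, euler ((y, z) : args A (d :: r)) = trA e (weight d *: y).
Proof. by case: r z => // z _; exists (euler_deg d). Qed.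

Lemma app_args_euler (s : seq int) (i : nat) (x : args A s) : (i < size s)%N ->
  let y := split_args 1 (split_args i x).2 in
  exists E : s = take i s ++ (sumz (take 1 (drop i s))
                   + (1 - (size (take 1 (drop i s)))%:Z)) :: drop 1 (drop i s),
    app_args (s2 := _ :: _) (split_args i x).1 ((euler y.1, y.2) : args A (_ :: _))
    = cast_args E (scale_arg (fun j => weight j) i x).
Proof.
elim: s i x => [|j r IH] [|i] x //= lt_i; case: x => x0 x.
  case: r x {IH lt_i} => [|k r] x /=.
    exists (congr1 (fun d => [:: d]) (euler_deg j)).
    by rewrite (cast_args_head (euler_deg j)); case: x.
  exists (congr1 (fun d => d :: k :: r) (euler_deg j)).
  by rewrite (cast_args_head (euler_deg j)).
have [E' h] := IH i x lt_i.
by exists (congr1 (cons j) E'); rewrite (cast_args_tail E') -h.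
Qed.

Section Insertion.
Variables (t : int) (e : t + 1 - 1 = t) (f : cochain A t).
Arguments f : clear implicits.

Lemma ins_euler_right (i : nat) (s : seq int) (x : args A s) :
  multilinear f -> (i < size s)%N -> ins e f euler i 1 x = weight (nth 0 s i) *: f s x.
Proof.
move=> f_ml lt_i; rewrite /ins.
have [E ->] := app_args_euler x lt_i.
rewrite -(cochain_cast f E _ (congr1 (fun s => sumz s + (t - (size s)%:Z)) E)).
rewrite (multilinear_scale_arg (fun j => weight j) f_ml x lt_i).
by rewrite !trZ tr_trans tr_id subrr mul0r scale1r.
Qed.

Lemma ins_euler_left (s : seq int) (x : args A s) :
  ins (degC e) euler f 0 (size s) x = weight (sumz s + (t - (size s)%:Z)) *: f s x.
Proof.
rewrite /ins; case: s x => [|j r] x /=.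
  case: x; have [e' ->] := @euler_single _ [::] (f [::] tt) tt erefl.
  by rewrite mulr0 scale1r !trZ tr_trans tr_id.
case: x => x0 x /=.
have drop_nil : size (drop (size r) r) = 0%N by rewrite size_drop subnn.
have [e' ->] := euler_single (f (j :: take (size r) r) (x0, (split_args (size r) x).1))
                  (split_args (size r) x).2 drop_nil.
have [E' ->] := split_args_size x.
have E := congr1 (cons j) E'.
rewrite -(cast_args_tail E' E).
rewrite -(cochain_cast f E _ (congr1 (fun s => sumz s + (t - (size s)%:Z)) E)).
by rewrite !trZ !tr_trans tr_id mulr0 scale1r take_size.
Qed.

Lemma ins_euler_right_eq0 (s : seq int) (x : args A s) (i p : nat) :
  multilinear f -> p != 1%N -> (i < (size s).+1 - p)%N -> ins e f euler i p x = 0.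
Proof.
move=> f_ml p_neq1 lt_i; rewrite /ins euler_eq0; last first.
  by rewrite size_take_min size_drop; apply/eqP; lia.
by rewrite (linear_fun0 (f_ml _ _ _ _ _)) scaler0 tr0.
Qed.

Lemma ins_euler_left_eq0 (s : seq int) (x : args A s) (i p : nat) :
  (i < p)%N -> p != 1%N -> (p < (size s).+2)%N ->
  ins (degC e) euler f i ((size s).+1 - p) x = 0.
Proof.
move=> lt_i p_neq1 lt_p; rewrite /ins euler_eq0 ?scaler0 ?tr0 //.
by rewrite size_cat size_take_min /= !size_drop; apply/eqP; lia.
Qed.

Lemma sum_weight_nth (s : seq int) :
  \sum_(i < size s) weight (nth 0 s i) = ((size s)%:Z - sumz s)%:~R.
Proof.
elim: s => [|j r IH]; first by rewrite big_ord0.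
by rewrite big_ord_recl /= IH -intrD; congr (_%:~R); lia.
Qed.

Lemma brk_euler (s : seq int) (x : args A s) :
  multilinear f -> brk e f euler x = (t - 1)%:~R *: f s x.
Proof.
(* only the summands in which [euler] has arity 1 survive *)
move=> f_ml; rewrite /brk (bigD1 (inord 1)) //=.
rewrite [X in _ + X = _]big1 ?addr0; last first.
  move=> p p_neq1; have {}p_neq1 : (p : nat) != 1%N.
    by apply: contraNneq p_neq1 => p1; apply/eqP/val_inj; rewrite /= inordK.
  rewrite big1 => [|i _]; last by rewrite ins_euler_right_eq0 ?scaler0.
  rewrite big1 ?scaler0 ?subrr // => i _.
  by rewrite ins_euler_left_eq0 ?scaler0.
rewrite inordK // subSS subn0.
under eq_bigr => i _ do rewrite subrr !mulr0 !addr0 scale1r ins_euler_right //.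
rewrite big_ord1 /= subrr !mul0r mulr0 !addr0 !scale1r ins_euler_left.
rewrite -scaler_suml -scalerBl sum_weight_nth -intrB; congr (_%:~R *: _); lia.
Qed.

End Insertion.
End Euler.

Theorem theorem1p9 (F : fieldType) (A : int -> lmodType F) (m : cochain A 2) :
  strict_Ainf m ->
  exists a : cochain A 1,
    multilinear a /\
    forall (s : seq int) (x : args A s), brk deg_ma m a x = m s x.
Proof.
case=> m_ml _ _; exists (euler (A := A)); split; first exact: euler_multilinear.
by move=> s x; rewrite brk_euler // scale1r.
Qed.
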